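(* Let $s,s'\in\mathbb C$ and $f\in C_c^{\mathrm{lc}}(G/M)$. Then $\mathcal R_{s,s'}f$ is a well-defined, locally constant, compactly supported function on $G/M\langle\tau\rangle$; equivalently, under the bijection $G/M\langle\tau\rangle\cong(\Omega\times\Omega)\setminus\mathrm{diag}(\Omega)$, $\mathcal R_{s,s'}f\in C_c^{\mathrm{lc}}((\Omega\times\Omega)\setminus\mathrm{diag}(\Omega))$.
   Context: Let $q\ge2$, $\mathfrak G$ the $(q+1)$-regular tree with vertex set $\mathfrak X$, graph distance $d$ and boundary $\Omega$ (infinite non-backtracking edge chains modulo eventual equality up to shift, topologized by the sets of classes of chains starting with a given directed edge). Fix a vertex $o$ and $\omega_-\ne\omega_+$ with $o$ on the geodesic $]\omega_-,\omega_+[$; $\langle x,\omega\rangle=d(o,y)-d(x,y)$ where $[o,\omega)\cap[x,\omega)=[y,\omega)$. $G=\mathrm{Aut}(\mathfrak G)$ (topology of pointwise convergence), $K=\mathrm{Stab}_G(o)$, $B_{\omega_+}=\{g:g\omega_+=\omega_+,\ g\text{ fixes a vertex}\}$, $\tau\in G$ fixes $\omega_\pm$ and translates $]\omega_-,\omega_+[$ one step towards $\omega_+$; $g=kn\tau^j$ ($k\in K,n\in B_{\omega_+}$) with unique $j=:H(g)$. $r\in K$ with $r^2=\mathrm{id}$, $r\tau^jr^{-1}=\tau^{-j}$. $M=\{\gamma\in K:\gamma$ fixes $]\omega_-,\omega_+[$ pointwise$\}$. $G/M$ is homeomorphic to $\mathfrak P=\{(\omega_1,\omega_2,x):\omega_1\neq\omega_2,\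 x\in]\omega_1,\omega_2[\}\subseteq\Omega\times\Omega\times\mathfrak X$ via $gM\mapsto(g\omega_-,g\omega_+,go)$; $C_c^{\mathrm{lc}}(G/M)$ denotes locally constant compactly supported functions. $G/M\langle\tau\rangle$ carries the quotient topology, and $gM\langle\tau\rangle\mapsto(g\omega_-,g\omega_+)$ is a bijection onto $(\Omega\times\Omega)\setminus\mathrm{diag}(\Omega)$. With $d_{s,s'}(gM)=q^{(\frac12+is)H(g)}q^{(\frac12+is')H(gr)}$, the weighted Radon transform is $(\mathcal R_{s,s'}f)(g)=\sum_{j\in\mathbb Z}f(g\tau^jM)\,d_{s,-\overline{s'}}(g\tau^jM)$. *)

From Stdlib Require Import Reals ZArith List ClassicalEpsilon.
From Coquelicot Require Import Coquelicot.

Set Implicit Arguments.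

Section Tree.
Variable V : Type.
Variable adj : V -> V -> Prop.

Fixpoint nb_walk (l : list V) : Prop :=
  match l with
  | x :: ((y :: nil) as t) => adj x y
  | x :: ((y :: z :: _) as t) => adj x y /\ z <> x /\ nb_walk t
  | _ => True
  end.

Fixpoint walk (l : list V) : Prop :=
  match l with
  | x :: ((y :: _) as t) => adj x y /\ walk t
  | _ => True
  end.

Definition is_regular_tree (q : nat) : Prop :=
  (forall x y, adj x y -> adj y x) /\
  (forall x, ~ adj x x) /\
  (forall x, exists nbrs : list V,
       length nbrs = S q /\ NoDup nbrs /\ forall y, adj x y <-> In y nbrs) /\
  (forall x y, exists l, walk (x :: l ++ y :: nil)) /\
  (forall x l, ~ nb_walk (x :: l ++ x :: nil)).

(* ---------- boundary: rays modulo eventual equality up to shift ---------- *)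

Definition ray (w : nat -> V) : Prop :=
  (forall n, adj (w n) (w (S n))) /\ (forall n, w (S (S n)) <> w n).

Definition ray_equiv (w1 w2 : nat -> V) : Prop :=
  exists k m, forall n, w1 (n + k)%nat = w2 (n + m)%nat.

Definition is_aut (g : V -> V) : Prop :=
  (forall x y, adj x y <-> adj (g x) (g y)) /\
  exists ginv : V -> V, forall x, ginv (g x) = x /\ g (ginv x) = x.

Definition fixes_end (g : V -> V) (w : nat -> V) : Prop :=
  ray_equiv (fun n => g (w n)) w.

(* the bi-infinite geodesic ]omega_-, omega_+[ , ell 0 = o *)
Definition bi_geodesic (ell : Z -> V) : Prop :=
  (forall z, adj (ell z) (ell (z + 1)%Z)) /\ (forall z, ell (z + 2)%Z <> ell z).

Definition omega_plus (ell : Z -> V) : nat -> V := fun n => ell (Z.of_nat n).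
Definition omega_minus (ell : Z -> V) : nat -> V := fun n => ell (- Z.of_nat n)%Z.

Definition inK (o : V) (k : V -> V) : Prop := is_aut k /\ k o = o.

Definition inB (ell : Z -> V) (n : V -> V) : Prop :=
  is_aut n /\ fixes_end n (omega_plus ell) /\ exists v, n v = v.

Definition inM (o : V) (ell : Z -> V) (g : V -> V) : Prop :=
  inK o g /\ forall z, g (ell z) = ell z.

Definition tpow (tau tinv : V -> V) (j : Z) : V -> V :=
  match j with
  | Z0 => fun x => x
  | Zpos p => Nat.iter (Pos.to_nat p) tau
  | Zneg p => Nat.iter (Pos.to_nat p) tinv
  end.

Definition Hiw (o : V) (ell : Z -> V) (tau tinv : V -> V) (g : V -> V) : Z :=
  epsilon (inhabits 0%Z) (fun j => exists k n, inK o k /\ inB ell n /\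
     forall x, g x = k (n (tpow tau tinv j x))).

(* open subsets of G = Aut (pointwise convergence, V discrete) *)
Definition G_open (U : (V -> V) -> Prop) : Prop :=
  forall g, is_aut g -> U g -> exists F : list V,
    forall h, is_aut h -> (forall x, In x F -> h x = g x) -> U h.

(* right-L-saturated subsets of G = subsets of G/L *)
Definition saturated (L : (V -> V) -> Prop) (S : (V -> V) -> Prop) : Prop :=
  forall g l, is_aut g -> L l -> S g -> S (fun x => g (l x)).

Definition quot_open (L : (V -> V) -> Prop) (U : (V -> V) -> Prop) : Prop := saturated L U /\ G_open U.

Definition quot_compact (L : (V -> V) -> Prop) (S : (V -> V) -> Prop) : Prop :=
  saturated L S /\
  forall (I : Type) (U : I -> (V -> V) -> Prop),
    (forall i, quot_open L (U i)) ->
    (forall g, is_aut g -> S g -> exists i, U i g) ->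
    exists fin : list I, forall g, is_aut g -> S g -> exists i, In i fin /\ U i g.

(* F : G -> C descends to G/L *)
Definition invariant (L : (V -> V) -> Prop) (F : (V -> V) -> C) : Prop :=
  forall g l, is_aut g -> L l -> F (fun x => g (l x)) = F g.

Definition quot_loc_const (L : (V -> V) -> Prop) (F : (V -> V) -> C) : Prop :=
  forall g, is_aut g -> exists U, quot_open L U /\ U g /\
    forall h, is_aut h -> U h -> F h = F g.

Definition quot_comp_supp (L : (V -> V) -> Prop) (F : (V -> V) -> C) : Prop :=
  exists S, quot_compact L S /\ forall g, is_aut g -> F g <> RtoC 0 -> S g.

Definition Cc_lc (L : (V -> V) -> Prop) (F : (V -> V) -> C) : Prop :=
  invariant L F /\ quot_loc_const L F /\ quot_comp_supp L F.

Definition inMtau o ell tau tinv (l : V -> V) : Prop :=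
  exists gam k, inM o ell gam /\ l = (fun x => gam (tpow tau tinv k x)).

End Tree.

Definition cexp (z : C) : C :=
  (exp (fst z) * cos (snd z), exp (fst z) * sin (snd z))%R.

Definition qpow (q : nat) (z : C) (j : Z) : C :=
  cexp (Cmult z (RtoC (IZR j * ln (INR q)))).

Definition half_plus_is (s : C) : C := Cplus (RtoC (/2)) (Cmult Ci s).

Definition dss {V : Type} (adj : V -> V -> Prop) (q : nat) (o : V) (ell : Z -> V)
    (tau tinv r : V -> V) (s s' : C) (g : V -> V) : C :=
  Cmult (qpow q (half_plus_is s) (Hiw adj o ell tau tinv g))
        (qpow q (half_plus_is s') (Hiw adj o ell tau tinv (fun x => g (r x)))).

Definition zsum (a : Z -> C) : C :=
  let N := epsilon (inhabits 0%nat)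
             (fun N : nat => forall j, (Z.of_nat N < Z.abs j)%Z -> a j = RtoC 0) in
  fold_right Cplus (RtoC 0)
    (map (fun k => a (Z.of_nat k - Z.of_nat N)%Z) (seq 0 (2 * N + 1))).

Definition radon_term {V : Type} (adj : V -> V -> Prop) (q : nat) (o : V) (ell : Z -> V)
    (tau tinv r : V -> V) (s s' : C) (f : (V -> V) -> C) (g : V -> V) (j : Z) : C :=
  let gj := fun x => g (tpow tau tinv j x) in
  Cmult (f gj) (dss adj q o ell tau tinv r s (Copp (Cconj s')) gj).

Definition radon {V : Type} (adj : V -> V -> Prop) (q : nat) (o : V) (ell : Z -> V)
    (tau tinv r : V -> V) (s s' : C) (f : (V -> V) -> C) (g : V -> V) : C :=
  zsum (radon_term adj q o ell tau tinv r s s' f g).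

From Stdlib Require Import Reals ZArith List ClassicalEpsilon Classical
  FunctionalExtensionality PropExtensionality Lia.
From Coquelicot Require Import Coquelicot.

(* For fixed g, f(g tau^j) vanishes for |j| large: supp f is compact in G/M, so
   h o stays in finitely many spheres around o for h in supp f, a K-invariant
   finite set, while j |-> g tau^j o = g (ell j) is injective.  Thus R f is a
   finite sum.  Right translation by gamma tau^k (gamma in M) shifts the index
   by k, because tau normalises M and f, d are right M-invariant.  Every h near
   g is k g with k in K, d is left K-invariant, and the finitely many relevant
   terms are locally constant; so R f is locally constant.  Its support lies in
   the image of supp f in G/M<tau>, which is compact.  The weight d enters only
   through these two invariances. *)

Fixpoint sumZ (a : Z -> C) (lo : Z) (n : nat) : C :=
  match n with
  | O => RtoC 0
  | S n => Cplus (a lo) (sumZ a (lo + 1)%Z n)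
  end.

Definition vanishes_beyond (a : Z -> C) (N : nat) : Prop :=
  forall j, (Z.of_nat N < Z.abs j)%Z -> a j = RtoC 0.

Lemma fold_map_seq_sumZ a N s n :
  fold_right Cplus (RtoC 0) (map (fun k => a (Z.of_nat k - Z.of_nat N)%Z) (seq s n))
  = sumZ a (Z.of_nat s - Z.of_nat N)%Z n.
Proof.
  revert s; induction n as [|n IH]; intro s; simpl; auto.
  rewrite IH. do 2 f_equal. lia.
Qed.

Lemma sumZ_app a lo n m :
  sumZ a lo (n + m) = Cplus (sumZ a lo n) (sumZ a (lo + Z.of_nat n)%Z m).
Proof.
  revert lo; induction n as [|n IH]; intro lo; simpl.
  - rewrite Cplus_0_l, Z.add_0_r. reflexivity.
  - rewrite IH, Cplus_assoc. do 2 f_equal. lia.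
Qed.

Lemma sumZ_eq_0 a lo n :
  (forall i, (lo <= i < lo + Z.of_nat n)%Z -> a i = RtoC 0) -> sumZ a lo n = RtoC 0.
Proof.
  revert lo; induction n as [|n IH]; intros lo H; simpl; auto.
  rewrite H, IH by (try intros; try apply H; lia). apply Cplus_0_l.
Qed.

Lemma sumZ_shift a k lo n : sumZ (fun j => a (j + k)%Z) lo n = sumZ a (lo + k)%Z n.
Proof.
  revert lo; induction n as [|n IH]; intro lo; simpl; auto.
  rewrite IH. do 2 f_equal. lia.
Qed.

Lemma sumZ_window a N lo n : vanishes_beyond a N ->
  (lo <= - Z.of_nat N)%Z -> (Z.of_nat N + 1 <= lo + Z.of_nat n)%Z ->
  sumZ a lo n = sumZ a (- Z.of_nat N)%Z (2 * N + 1).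
Proof.
  intros Ha H1 H2.
  set (p := Z.to_nat (- Z.of_nat N - lo)).
  set (m := (n - p - (2 * N + 1))%nat).
  replace n with (p + ((2 * N + 1) + m))%nat by lia.
  rewrite sumZ_app, sumZ_app, (sumZ_eq_0 a lo p), (sumZ_eq_0 a _ m).
  - rewrite Cplus_0_l, Cplus_0_r. f_equal. lia.
  - intros i Hi. apply Ha. lia.
  - intros i Hi. apply Ha. lia.
Qed.

(* [zsum] uses an epsilon-chosen vanishing bound; any window containing the
   support gives the same sum. *)
Lemma zsum_window a N lo n : vanishes_beyond a N ->
  (lo <= - Z.of_nat N)%Z -> (Z.of_nat N + 1 <= lo + Z.of_nat n)%Z ->
  zsum a = sumZ a lo n.
Proof.
  intros Ha H1 H2. unfold zsum.
  set (N0 := epsilon _ _).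
  assert (HN0 : vanishes_beyond a N0) by exact (epsilon_spec _ _ (ex_intro _ N Ha)).
  rewrite fold_map_seq_sumZ.
  replace (Z.of_nat 0 - Z.of_nat N0)%Z with (- Z.of_nat N0)%Z by lia.
  set (Mx := (N + N0)%nat).
  rewrite <- (sumZ_window a N0 (- Z.of_nat Mx) (2 * Mx + 1)) by (auto; lia).
  rewrite (sumZ_window a N (- Z.of_nat Mx) (2 * Mx + 1)) by (auto; lia).
  symmetry. apply sumZ_window; auto.
Qed.

Lemma zsum_shift a k : (exists N, vanishes_beyond a N) ->
  zsum (fun j => a (j + k)%Z) = zsum a.
Proof.
  intros [N Ha]. set (Mx := (N + Z.to_nat (Z.abs k))%nat).
  rewrite (zsum_window _ Mx (- Z.of_nat Mx) (2 * Mx + 1)); try lia.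
  - rewrite sumZ_shift. symmetry. apply (zsum_window a N); auto; lia.
  - intros j Hj. apply Ha. lia.
Qed.

Lemma zsum_eq_0 a : (forall j, a j = RtoC 0) -> zsum a = RtoC 0.
Proof.
  intros Ha. rewrite (zsum_window a 0 0 1); try (intros j _; apply Ha); try lia.
  simpl. rewrite Ha. apply Cplus_0_l.
Qed.

Lemma Z_window_list (N : nat) :
  exists js : list Z, forall j, (Z.abs j <= Z.of_nat N)%Z -> In j js.
Proof.
  exists (map (fun n => Z.of_nat n - Z.of_nat N)%Z (seq 0 (2 * N + 1))).
  intros j Hj. apply in_map_iff. exists (Z.to_nat (j + Z.of_nat N)).
  split; [lia | apply in_seq; lia].
Qed.

Lemma list_union_witness {A B : Type} (Q : A -> list B -> Prop) :
  (forall a l l', incl l l' -> Q a l -> Q a l') -> (forall a, exists l, Q a l) ->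
  forall la : list A, exists l, forall a, In a la -> Q a l.
Proof.
  intros Hmono Hex la. induction la as [|a la [l Hl]].
  - exists nil. intros a [].
  - destruct (Hex a) as [l' Hl']. exists (l' ++ l). intros b [->|Hb].
    + apply (Hmono b l'); auto. apply incl_appl, incl_refl.
    + apply (Hmono b l); auto. apply incl_appr, incl_refl.
Qed.

Section Automorphisms.
Context {V : Type} {adj : V -> V -> Prop}.

Lemma aut_id : is_aut adj (fun x => x).
Proof. split; [tauto | exists (fun x => x); auto]. Qed.

Lemma aut_comp a b : is_aut adj a -> is_aut adj b -> is_aut adj (fun x => a (b x)).
Proof.
  intros [Ha [ai Hai]] [Hb [bi Hbi]]. split.
  - intros x y. rewrite Hb, Ha. tauto.
  - exists (fun x => bi (ai x)). intro x.
    rewrite (proj1 (Hai _)), (proj1 (Hbi _)), (proj2 (Hbi _)), (proj2 (Hai _)). auto.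
Qed.

Lemma aut_of_inverse a ai : is_aut adj a ->
  (forall x, ai (a x) = x /\ a (ai x) = x) -> is_aut adj ai.
Proof.
  intros [Ha _] H. split.
  - intros x y. rewrite (Ha (ai x) (ai y)), (proj2 (H x)), (proj2 (H y)). tauto.
  - exists a. intro x. split; apply H.
Qed.

Lemma aut_inverse a : is_aut adj a ->
  exists ai, is_aut adj ai /\ forall x, ai (a x) = x /\ a (ai x) = x.
Proof.
  intros Ha. pose proof Ha as [_ [ai Hai]]. exists ai.
  split; [apply (aut_of_inverse a); auto | exact Hai].
Qed.

Lemma aut_inj a x y : is_aut adj a -> a x = a y -> x = y.
Proof. intros [_ [ai H]] E. rewrite <- (proj1 (H x)), <- (proj1 (H y)), E. auto. Qed.

Lemma factor_left_stabilizer g h o x0 : is_aut adj g -> is_aut adj h ->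
  g x0 = o -> h x0 = o -> exists k, inK adj o k /\ h = (fun x => k (g x)).
Proof.
  intros Hg Hh Hgx Hhx. destruct (aut_inverse g Hg) as (gi & Hgi & Hinv).
  exists (fun x => h (gi x)). split; [split|].
  - apply aut_comp; auto.
  - rewrite <- Hgx at 1. rewrite (proj1 (Hinv x0)). exact Hhx.
  - extensionality x. rewrite (proj1 (Hinv x)). reflexivity.
Qed.

Record aut_subgroup (L : (V -> V) -> Prop) : Prop := {
  sg_id : L (fun x => x);
  sg_comp : forall a b, L a -> L b -> L (fun x => a (b x));
  sg_aut : forall a, L a -> is_aut adj a;
  sg_inv : forall a, L a -> exists ai, L ai /\ forall x, ai (a x) = x /\ a (ai x) = x }.

Definition fixes_all (P : V -> Prop) (a : V -> V) : Prop :=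
  is_aut adj a /\ forall x, P x -> a x = x.

Lemma fixes_all_subgroup P : aut_subgroup (fixes_all P).
Proof.
  split.
  - split; auto using aut_id.
  - intros a b [Ha Hfa] [Hb Hfb]. split; [apply aut_comp; auto|].
    intros x Hx. rewrite Hfb, Hfa; auto.
  - intros a Ha. apply Ha.
  - intros a [Ha Hfa]. destruct (aut_inverse a Ha) as (ai & Hai & Hinv).
    exists ai. split; [split; [exact Hai|] | exact Hinv].
    intros x Hx. rewrite <- (Hfa x Hx) at 1. apply Hinv.
Qed.

Lemma aut_subgroup_ext L {L'} : (forall a, L a <-> L' a) -> aut_subgroup L -> aut_subgroup L'.
Proof.
  intros E [Hid Hcomp Haut Hinv]. split.
  - apply E, Hid.
  - intros a b Ha Hb. apply E, Hcomp; apply E; auto.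
  - intros a Ha. apply Haut, E, Ha.
  - intros a Ha. destruct (Hinv a (proj2 (E a) Ha)) as (ai & Hai & H).
    exists ai. split; auto. apply E, Hai.
Qed.

Lemma subgroup_left_iff {L} (P : (V -> V) -> Prop) : aut_subgroup L ->
  (forall l g, L l -> P g -> P (fun x => l (g x))) ->
  forall l g, L l -> (P (fun x => l (g x)) <-> P g).
Proof.
  intros HL HP l g Hl. split; [|apply HP; auto].
  destruct (sg_inv _ HL l Hl) as (li & Hli & Hinv). intro H.
  replace g with (fun x => li (l (g x))) by (extensionality x; apply Hinv).
  apply (HP li (fun x => l (g x))); auto.
Qed.

Lemma subgroup_right_iff {L} (P : (V -> V) -> Prop) : aut_subgroup L ->
  (forall l g, L l -> P g -> P (fun x => g (l x))) ->
  forall l g, L l -> (P (fun x => g (l x)) <-> P g).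
Proof.
  intros HL HP l g Hl. split; [|apply HP; auto].
  destruct (sg_inv _ HL l Hl) as (li & Hli & Hinv). intro H.
  replace g with (fun x => g (l (li x))) by (extensionality x; f_equal; apply Hinv).
  apply (HP li (fun x => g (l x))); auto.
Qed.

Definition agree_on (F : list V) (h g : V -> V) : Prop := forall x, In x F -> h x = g x.

Definition right_saturation (L U : (V -> V) -> Prop) (h : V -> V) : Prop :=
  exists h0 l, is_aut adj h0 /\ U h0 /\ L l /\ h = (fun x => h0 (l x)).

Section Saturation.
Context {L : (V -> V) -> Prop} (HL : aut_subgroup L).

Lemma right_saturation_saturated U : saturated adj L (right_saturation L U).
Proof.
  intros h l' _ Hl' (h0 & l & Hh0 & HU & Hl & ->).
  exists h0, (fun x => l (l' x)).
  split; [|split; [|split]]; auto. apply (sg_comp _ HL); auto.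
Qed.

Lemma right_saturation_self (U : (V -> V) -> Prop) h :
  is_aut adj h -> U h -> right_saturation L U h.
Proof.
  intros Hh HU. exists h, (fun x => x).
  split; [|split; [|split]]; auto. apply (sg_id _ HL).
Qed.

Lemma quot_open_right_saturation U : G_open adj U -> quot_open adj L (right_saturation L U).
Proof.
  intros HU. split; [apply right_saturation_saturated|].
  intros h _ (h0 & l & Hh0 & HUh0 & Hl & ->).
  destruct (HU h0 Hh0 HUh0) as [F HF].
  destruct (sg_inv _ HL l Hl) as (li & Hli & Hinv).
  exists (map li F). intros h' Hh' Hag.
  assert (Hh'li : is_aut adj (fun x => h' (li x))).
  { apply aut_comp; auto. apply (sg_aut _ HL), Hli. }
  exists (fun x => h' (li x)), l. split; [|split; [|split]]; auto.
  - apply HF; auto. intros x Hx.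
    rewrite Hag by (apply in_map, Hx). rewrite (proj2 (Hinv x)). reflexivity.
  - extensionality x. rewrite (proj1 (Hinv x)). reflexivity.
Qed.

Lemma quot_loc_const_of_agree {F} : invariant adj L F ->
  (forall g, is_aut adj g -> exists Fin, forall h, is_aut adj h -> agree_on Fin h g -> F h = F g) ->
  quot_loc_const adj L F.
Proof.
  intros Hinv Hloc g Hg. destruct (Hloc g Hg) as [Fin HFin].
  exists (right_saturation L (fun h => agree_on Fin h g)). split; [|split].
  - apply quot_open_right_saturation.
    intros h Hh Hag. exists Fin. intros h' Hh' Hag' x Hx. rewrite Hag', Hag; auto.
  - apply right_saturation_self; auto. intros x _. reflexivity.
  - intros h Hh (h0 & l & Hh0 & Hag & Hl & ->). rewrite Hinv; auto.
Qed.

Lemma quot_compact_right_saturation {L0 S} : (forall l, L0 l -> L l) ->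
  quot_compact adj L0 S -> quot_compact adj L (right_saturation L S).
Proof.
  intros Hsub [_ HS]. split; [apply right_saturation_saturated|].
  intros I U HU Hcov.
  destruct (HS I U) as [fin Hfin].
  - intro i. destruct (HU i) as [Hsat Hopen]. split; auto.
    intros g l Hg Hl. apply Hsat; auto.
  - intros h Hh HSh. apply Hcov; auto. apply right_saturation_self; auto.
  - exists fin. intros h _ (h0 & l & Hh0 & HSh0 & Hl & ->).
    destruct (Hfin h0 Hh0 HSh0) as (i & Hi & HUi). exists i. split; auto.
    apply (proj1 (HU i)); auto.
Qed.

End Saturation.

Lemma quot_loc_const_agree {L F g} : quot_loc_const adj L F -> is_aut adj g ->
  exists Fin, forall h, is_aut adj h -> agree_on Fin h g -> F h = F g.
Proof.
  intros HF Hg. destruct (HF g Hg) as (U & [_ HU] & HUg & Hconst).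
  destruct (HU g Hg HUg) as [Fin HFin]. exists Fin. intros h Hh Hag. apply Hconst; auto.
Qed.

End Automorphisms.

Arguments aut_subgroup {V} adj L.
Arguments fixes_all {V} adj P a.
Arguments right_saturation {V} adj L U h.
Arguments sg_id {V adj L}.
Arguments sg_comp {V adj L}.
Arguments sg_aut {V adj L}.
Arguments sg_inv {V adj L}.

Section Tree.
Context {V : Type} (adj : V -> V -> Prop).

Fixpoint reach (n : nat) (x y : V) : Prop :=
  match n with
  | O => x = y
  | S n => exists z, adj x z /\ reach n z y
  end.

Lemma reach_aut a n x y : is_aut adj a -> reach n x y -> reach n (a x) (a y).
Proof.
  intros Ha. revert x. induction n as [|n IH]; intros x H; simpl in *.
  - subst; auto.
  - destruct H as (z & Hxz & Hz). exists (a z). split; [apply (proj1 Ha x z), Hxz | apply IH, Hz].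
Qed.

Lemma reach_from_fixed a n o y : is_aut adj a -> a o = o -> reach n o (a y) -> reach n o y.
Proof.
  intros Ha Hao H. destruct (aut_inverse a Ha) as (ai & Hai & Hinv).
  rewrite <- (proj1 (Hinv y)), <- (proj1 (Hinv o)), Hao. apply reach_aut; auto.
Qed.

Section LocallyFinite.
Hypothesis Hlf : forall x, exists nbrs, forall y, adj x y -> In y nbrs.

Lemma reach_finite n x : exists T, forall y, reach n x y -> In y T.
Proof.
  revert x. induction n as [|n IH]; intro x.
  - exists (x :: nil). intros y <-. left; auto.
  - destruct (Hlf x) as [nbrs Hn].
    destruct (list_union_witness (fun z T => forall y, reach n z y -> In y T))
      with (la := nbrs) as [T HT].
    + intros z T T' HTT' H y Hy. apply HTT', H, Hy.
    + exact IH.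
    + exists T. intros y (z & Hxz & Hz). apply (HT z); auto.
Qed.

Lemma spheres_finite x ns : exists T, forall n y, In n ns -> reach n x y -> In y T.
Proof.
  destruct (list_union_witness (fun n T => forall y, reach n x y -> In y T))
    with (la := ns) as [T HT].
  - intros n T T' HTT' H y Hy. apply HTT', H, Hy.
  - intro n. apply reach_finite.
  - exists T. intros n y Hn. apply HT, Hn.
Qed.

End LocallyFinite.

Lemma quot_compact_spheres {L S : (V -> V) -> Prop} o :
  (forall y, exists n, reach n o y) -> (forall l, L l -> l o = o) ->
  quot_compact adj L S ->
  exists ns, forall h, is_aut adj h -> S h -> exists n, In n ns /\ reach n o (h o).
Proof.
  intros Hconn HLo [_ HS].
  destruct (HS nat (fun n h => reach n o (h o))) as [ns Hns].
  - intro n. split.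
    + intros h l _ Hl H. simpl. rewrite HLo; auto.
    + intros h _ H. exists (o :: nil). intros h' _ Hag. rewrite Hag; auto. left; auto.
  - intros h _ _. apply Hconn.
  - exists ns. exact Hns.
Qed.

Lemma walk_reach l x y : walk adj (x :: l ++ y :: nil) -> reach (S (length l)) x y.
Proof.
  revert x. induction l as [|a l IH]; intros x H; simpl in *.
  - exists y. split; [apply H | reflexivity].
  - exists a. destruct H as [H1 H2]. split; auto.
Qed.

Lemma regular_tree_locally_finite {q} : is_regular_tree adj q ->
  forall x, exists nbrs, forall y, adj x y -> In y nbrs.
Proof.
  intros (_ & _ & Hnb & _) x. destruct (Hnb x) as (nbrs & _ & _ & Hn).
  exists nbrs. intro y. apply Hn.
Qed.

Lemma regular_tree_connected {q} : is_regular_tree adj q -> forall x y, exists n, reach n x y.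
Proof.
  intros (_ & _ & _ & Hc & _) x y. destruct (Hc x y) as [l Hl].
  eexists. apply walk_reach, Hl.
Qed.

Section Geodesic.
Variable ell : Z -> V.
Hypothesis Hell : bi_geodesic adj ell.

Fixpoint geodesic_segment (a : Z) (n : nat) : list V :=
  match n with
  | O => nil
  | S n => ell a :: geodesic_segment (a + 1)%Z n
  end.

Lemma geodesic_segment_nb_walk n i : nb_walk adj (ell i :: geodesic_segment (i + 1)%Z n).
Proof.
  revert i. induction n as [|n IH]; intro i; simpl; auto.
  destruct n as [|n]; simpl; [apply Hell|].
  specialize (IH (i + 1)%Z). simpl in IH.
  repeat split; auto; [apply Hell|].
  replace (i + 1 + 1)%Z with (i + 2)%Z by lia. apply Hell.
Qed.

Lemma geodesic_segment_snoc a n :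
  geodesic_segment a (S n) = geodesic_segment a n ++ ell (a + Z.of_nat n)%Z :: nil.
Proof.
  revert a. induction n as [|n IH]; intro a; simpl.
  - rewrite Z.add_0_r. reflexivity.
  - f_equal. specialize (IH (a + 1)%Z). simpl in IH. rewrite IH. do 3 f_equal. lia.
Qed.

Lemma bi_geodesic_injective :
  (forall x l, ~ nb_walk adj (x :: l ++ x :: nil)) ->
  forall i j, ell i = ell j -> i = j.
Proof.
  intros Hacyc.
  assert (Hlt : forall i j, (i < j)%Z -> ell i <> ell j).
  { intros i j Hij E.
    set (n := Z.to_nat (j - i - 1)).
    apply (Hacyc (ell i) (geodesic_segment (i + 1)%Z n)).
    rewrite E at 2. replace j with (i + 1 + Z.of_nat n)%Z by lia.
    rewrite <- geodesic_segment_snoc. apply geodesic_segment_nb_walk. }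
  intros i j E. destruct (Z.lt_total i j) as [H|[H|H]]; auto.
  - exfalso. exact (Hlt i j H E).
  - exfalso. exact (Hlt j i H (eq_sym E)).
Qed.

End Geodesic.

Lemma injective_Z_preimage_bounded (u : Z -> V) :
  (forall i j, u i = u j -> i = j) ->
  forall T : list V, exists N : nat, forall j, In (u j) T -> (Z.abs j <= Z.of_nat N)%Z.
Proof.
  intros Hu T. induction T as [|y T [N HN]].
  - exists O. intros j [].
  - destruct (classic (exists j0, u j0 = y)) as [[j0 <-]|Hno].
    + exists (N + Z.to_nat (Z.abs j0))%nat. intros j [E|Hj].
      * apply Hu in E. subst. lia.
      * specialize (HN j Hj). lia.
    + exists N. intros j [E|Hj]; auto. exfalso. eauto.
Qed.

End Tree.

Section Translations.
Context {V : Type} (adj : V -> V -> Prop) {tau tinv : V -> V}.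
Hypothesis Htinv : forall x, tinv (tau x) = x /\ tau (tinv x) = x.

Local Notation tp := (tpow tau tinv).

Lemma tp_of_nat n x : tp (Z.of_nat n) x = Nat.iter n tau x.
Proof. destruct n; [reflexivity|]. simpl. rewrite SuccNat2Pos.id_succ. reflexivity. Qed.

Lemma tp_opp_of_nat n x : tp (- Z.of_nat n) x = Nat.iter n tinv x.
Proof. destruct n; [reflexivity|]. simpl. rewrite SuccNat2Pos.id_succ. reflexivity. Qed.

Lemma Z_nat_cases z : (exists n, z = Z.of_nat n) \/ (exists n, z = (- Z.of_nat (S n))%Z).
Proof.
  destruct (Z_le_gt_dec 0 z).
  - left. exists (Z.to_nat z). lia.
  - right. exists (Z.to_nat (- z - 1)). lia.
Qed.

Lemma tp_succ z x : tp (Z.succ z) x = tau (tp z x).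
Proof.
  destruct (Z_nat_cases z) as [[n ->]|[n ->]].
  - replace (Z.succ (Z.of_nat n)) with (Z.of_nat (S n)) by lia.
    rewrite !tp_of_nat. reflexivity.
  - replace (Z.succ (- Z.of_nat (S n))) with (- Z.of_nat n)%Z by lia.
    rewrite !tp_opp_of_nat. simpl. rewrite (proj2 (Htinv _)). reflexivity.
Qed.

Lemma tp_pred z x : tp (Z.pred z) x = tinv (tp z x).
Proof.
  destruct (Z_nat_cases z) as [[[|n] ->]|[n ->]].
  - reflexivity.
  - replace (Z.pred (Z.of_nat (S n))) with (Z.of_nat n) by lia.
    rewrite !tp_of_nat. simpl. rewrite (proj1 (Htinv _)). reflexivity.
  - replace (Z.pred (- Z.of_nat (S n))) with (- Z.of_nat (S (S n)))%Z by lia.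
    rewrite !tp_opp_of_nat. reflexivity.
Qed.

Lemma tp_add a b x : tp (a + b) x = tp a (tp b x).
Proof.
  revert x. induction a as [|a IH|a IH] using Z.peano_ind; intro x.
  - reflexivity.
  - replace (Z.succ a + b)%Z with (Z.succ (a + b)) by lia. rewrite !tp_succ, IH. reflexivity.
  - replace (Z.pred a + b)%Z with (Z.pred (a + b)) by lia. rewrite !tp_pred, IH. reflexivity.
Qed.

Lemma tp_cancel a b x : (a + b = 0)%Z -> tp a (tp b x) = x.
Proof. intros H. rewrite <- tp_add, H. reflexivity. Qed.

Lemma aut_tp : is_aut adj tau -> forall j, is_aut adj (tp j).
Proof.
  intros Htau j. split.
  - intros x y. destruct Htau as [Hadj _]. induction j as [|j IH|j IH] using Z.peano_ind.
    + reflexivity.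
    + rewrite !tp_succ, <- Hadj. exact IH.
    + rewrite IH, !tp_pred, (Hadj (tinv _)), !(proj2 (Htinv _)). reflexivity.
  - exists (tp (- j)). intro x. split; apply tp_cancel; lia.
Qed.

Lemma aut_translate g j : is_aut adj tau -> is_aut adj g -> is_aut adj (fun x => g (tp j x)).
Proof. intros Htau Hg. apply aut_comp; auto. apply aut_tp, Htau. Qed.

Lemma tp_geodesic (ell : Z -> V) : (forall z, tau (ell z) = ell (z + 1)%Z) ->
  forall j z, tp j (ell z) = ell (z + j)%Z.
Proof.
  intros Htr j z. induction j as [|j IH|j IH] using Z.peano_ind.
  - rewrite Z.add_0_r. reflexivity.
  - rewrite tp_succ, IH, Htr. f_equal. lia.
  - rewrite tp_pred, IH. replace (z + j)%Z with (z + Z.pred j + 1)%Z by lia.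
    rewrite <- Htr, (proj1 (Htinv _)). reflexivity.
Qed.

End Translations.

Section Iwasawa.
Context {V : Type} (adj : V -> V -> Prop) {o : V} {ell : Z -> V} {tau tinv : V -> V}.
Hypothesis Ho : ell 0%Z = o.
Hypothesis Htau : is_aut adj tau.
Hypothesis Htinv : forall x, tinv (tau x) = x /\ tau (tinv x) = x.
Hypothesis Htau_tr : forall z, tau (ell z) = ell (z + 1)%Z.

Local Notation tp := (tpow tau tinv).
Local Notation K := (inK adj o).
Local Notation M := (inM adj o ell).
Local Notation Mtau := (inMtau adj o ell tau tinv).

Lemma tp_base j : tp j o = ell j.
Proof. rewrite <- Ho, (tp_geodesic Htinv ell Htau_tr). reflexivity. Qed.

Lemma inK_subgroup : aut_subgroup adj K.
Proof.
  apply (aut_subgroup_ext (fixes_all adj (fun x => x = o))); [|apply fixes_all_subgroup].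
  intro a. split; intros [Ha H]; split; auto. intros x ->. exact H.
Qed.

Lemma inM_fixes_geodesic a : M a <-> fixes_all adj (fun x => exists z, x = ell z) a.
Proof.
  split.
  - intros [[Ha _] H]. split; auto. intros x [z ->]. apply H.
  - intros [Ha H]. split; [split; auto|].
    + rewrite <- Ho. apply H. eauto.
    + intro z. apply H. eauto.
Qed.

Lemma inM_subgroup : aut_subgroup adj M.
Proof.
  apply (aut_subgroup_ext (fixes_all adj (fun x => exists z, x = ell z))).
  - intro a. symmetry. apply inM_fixes_geodesic.
  - apply fixes_all_subgroup.
Qed.

Lemma inM_conj a ai gam : is_aut adj a -> is_aut adj ai -> (forall x, a (ai x) = x) ->
  (forall z, exists w, ai (ell z) = ell w) -> M gam -> M (fun y => a (gam (ai y))).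
Proof.
  intros Ha Hai Hinv Hgeo Hgam. apply inM_fixes_geodesic. split.
  - apply aut_comp; auto. apply aut_comp; auto. apply Hgam.
  - intros x [z ->]. destruct (Hgeo z) as [w Hw].
    rewrite Hw, (proj2 Hgam w), <- Hw. apply Hinv.
Qed.

Lemma inM_conj_tp gam a b : M gam -> (a + b = 0)%Z -> M (fun y => tp a (gam (tp b y))).
Proof.
  intros Hgam Hab. apply inM_conj; try apply aut_tp; auto.
  - intro x. apply tp_cancel; auto.
  - intro z. exists (z + b)%Z. apply tp_geodesic; auto.
Qed.

Lemma inM_inMtau gam : M gam -> Mtau gam.
Proof. intros H. exists gam, 0%Z. split; auto. Qed.

Lemma inMtau_tp k : Mtau (tp k).
Proof. exists (fun x => x), k. split; auto. apply (sg_id inM_subgroup). Qed.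

Lemma inMtau_subgroup : aut_subgroup adj Mtau.
Proof.
  split.
  - apply inM_inMtau, (sg_id inM_subgroup).
  - intros a b (g & k & Hg & ->) (g' & k' & Hg' & ->).
    exists (fun x => g (tp k (g' (tp (- k) x)))), (k + k')%Z. split.
    + apply (sg_comp inM_subgroup); auto. apply inM_conj_tp; auto. lia.
    + extensionality x. rewrite <- (tp_add Htinv (- k)). do 4 f_equal. lia.
  - intros a (g & k & Hg & ->). apply aut_comp; [apply Hg | apply aut_tp; auto].
  - intros a (g & k & Hg & ->).
    destruct (sg_inv inM_subgroup g Hg) as (gi & Hgi & Hinv).
    exists (fun x => tp (- k) (gi x)). split.
    + exists (fun y => tp (- k) (gi (tp k y))), (- k)%Z. split.
      * apply inM_conj_tp; auto. lia.
      * extensionality x. rewrite (tp_cancel Htinv); [reflexivity | lia].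
    + intro x. split.
      * rewrite (proj1 (Hinv _)). apply tp_cancel; auto. lia.
      * rewrite (tp_cancel Htinv) by lia. apply Hinv.
Qed.

Definition iwasawa_decomp (g : V -> V) (j : Z) : Prop :=
  exists k n, K k /\ inB adj ell n /\ forall x, g x = k (n (tp j x)).

Lemma Hiw_ext g1 g2 : (forall j, iwasawa_decomp g1 j <-> iwasawa_decomp g2 j) ->
  Hiw adj o ell tau tinv g1 = Hiw adj o ell tau tinv g2.
Proof. intros H. unfold Hiw. f_equal. extensionality j. apply propositional_extensionality, H. Qed.

Lemma inB_conj_M gam gi n : M gam -> M gi -> (forall x, gam (gi x) = x) ->
  inB adj ell n -> inB adj ell (fun x => gi (n (gam x))).
Proof.
  intros Hgam Hgi Hinv (Hn & (a & b & Hab) & v & Hv). split; [|split].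
  - apply aut_comp; [apply Hgi|]. apply aut_comp; auto. apply Hgam.
  - exists a, b. intro m. unfold omega_plus in *.
    rewrite (proj2 Hgam), Hab. apply (proj2 Hgi).
  - exists (gi v). rewrite Hinv, Hv. reflexivity.
Qed.

Lemma iwasawa_decomp_left_K k g j : K k -> iwasawa_decomp g j ->
  iwasawa_decomp (fun x => k (g x)) j.
Proof.
  intros Hk (k1 & n & Hk1 & Hn & Hg). exists (fun x => k (k1 x)), n.
  split; [apply (sg_comp inK_subgroup); auto | split; auto].
  intro x. rewrite Hg. reflexivity.
Qed.

(* g gam = k n tau^j gam = (k gam') (gam'^-1 n gam') tau^j  with  gam' = tau^j gam tau^-j *)
Lemma iwasawa_decomp_right_M gam g j : M gam -> iwasawa_decomp g j ->
  iwasawa_decomp (fun x => g (gam x)) j.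
Proof.
  intros Hgam (k & n & Hk & Hn & Hg).
  assert (Hgam' : M (fun y => tp j (gam (tp (- j) y)))) by (apply inM_conj_tp; auto; lia).
  destruct (sg_inv inM_subgroup _ Hgam') as (gi & Hgi & Hinv).
  exists (fun x => k (tp j (gam (tp (- j) x)))), (fun x => gi (n (tp j (gam (tp (- j) x))))).
  split; [|split].
  - apply (sg_comp inK_subgroup); auto. apply Hgam'.
  - apply inB_conj_M; auto. apply Hinv.
  - intro x. rewrite (proj2 (Hinv _)), Hg, (tp_cancel Htinv) by lia. reflexivity.
Qed.

Lemma Hiw_left_K k g : K k ->
  Hiw adj o ell tau tinv (fun x => k (g x)) = Hiw adj o ell tau tinv g.
Proof.
  intros Hk. apply Hiw_ext. intro j.
  apply (subgroup_left_iff (fun g => iwasawa_decomp g j) inK_subgroup); auto.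
  intros l g' Hl. apply iwasawa_decomp_left_K, Hl.
Qed.

Lemma Hiw_right_M gam g : M gam ->
  Hiw adj o ell tau tinv (fun x => g (gam x)) = Hiw adj o ell tau tinv g.
Proof.
  intros Hgam. apply Hiw_ext. intro j.
  apply (subgroup_right_iff (fun g => iwasawa_decomp g j) inM_subgroup); auto.
  intros l g' Hl. apply iwasawa_decomp_right_M, Hl.
Qed.

Context {r : V -> V}.
Hypothesis Hr : K r.
Hypothesis Hr2 : forall x, r (r x) = x.
Hypothesis Hrtau : forall j x, r (tp j (r x)) = tp (- j) x.

Lemma r_geodesic z : r (ell z) = ell (- z)%Z.
Proof. pose proof (Hrtau z o) as H. rewrite (proj2 Hr), !tp_base in H. exact H. Qed.

Lemma inM_conj_r gam : M gam -> M (fun y => r (gam (r y))).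
Proof.
  intros Hgam. apply inM_conj; auto; try apply Hr.
  intro z. exists (- z)%Z. apply r_geodesic.
Qed.

Lemma dss_left_K q s1 s2 k g : K k ->
  dss adj q o ell tau tinv r s1 s2 (fun x => k (g x)) = dss adj q o ell tau tinv r s1 s2 g.
Proof.
  intros Hk. unfold dss.
  rewrite (Hiw_left_K k g Hk), (Hiw_left_K k (fun x => g (r x)) Hk). reflexivity.
Qed.

Lemma dss_right_M q s1 s2 gam g : M gam ->
  dss adj q o ell tau tinv r s1 s2 (fun x => g (gam x)) = dss adj q o ell tau tinv r s1 s2 g.
Proof.
  intros Hgam. unfold dss. rewrite (Hiw_right_M gam g Hgam).
  replace (fun x => g (gam (r x))) with (fun x => g (r (r (gam (r x)))))
    by (extensionality x; rewrite Hr2; reflexivity).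
  rewrite (Hiw_right_M (fun y => r (gam (r y))) (fun x => g (r x))); auto.
  apply inM_conj_r, Hgam.
Qed.

End Iwasawa.

Section Radon.
Context {V : Type} (adj : V -> V -> Prop) (q : nat) (o : V) (ell : Z -> V)
  (tau tinv r : V -> V) (s s' : C) (f : (V -> V) -> C).
Hypothesis Htree : is_regular_tree adj q.
Hypothesis Hell : bi_geodesic adj ell.
Hypothesis Ho : ell 0%Z = o.
Hypothesis Htau : is_aut adj tau.
Hypothesis Htinv : forall x, tinv (tau x) = x /\ tau (tinv x) = x.
Hypothesis Htau_tr : forall z, tau (ell z) = ell (z + 1)%Z.
Hypothesis Hr : inK adj o r.
Hypothesis Hr2 : forall x, r (r x) = x.
Hypothesis Hrtau : forall j x, r (tpow tau tinv j (r x)) = tpow tau tinv (- j) x.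
Hypothesis Hf_inv : invariant adj (inM adj o ell) f.
Hypothesis Hf_lc : quot_loc_const adj (inM adj o ell) f.
Hypothesis Hf_cs : quot_comp_supp adj (inM adj o ell) f.

Local Notation tp := (tpow tau tinv).
Local Notation K := (inK adj o).
Local Notation M := (inM adj o ell).
Local Notation Mtau := (inMtau adj o ell tau tinv).
Local Notation RT := (radon_term adj q o ell tau tinv r s s' f).
Local Notation RD := (radon adj q o ell tau tinv r s s' f).

Lemma f_translates_vanish g : is_aut adj g -> exists N : nat, forall k j, K k ->
  (Z.of_nat N < Z.abs j)%Z -> f (fun x => k (g (tp j x))) = RtoC 0.
Proof.
  intros Hg. destruct Hf_cs as (S & HS & Hsupp).
  destruct (quot_compact_spheres adj o (regular_tree_connected adj Htree o)
              (fun l Hl => proj2 (proj1 Hl)) HS) as [ns Hns].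
  destruct (spheres_finite adj (regular_tree_locally_finite adj Htree) o ns) as [T HT].
  assert (Hinj : forall i j, g (ell i) = g (ell j) -> i = j).
  { intros i j E. apply (bi_geodesic_injective adj ell Hell); [apply Htree|].
    exact (aut_inj _ _ _ Hg E). }
  destruct (injective_Z_preimage_bounded (fun j => g (ell j)) Hinj T) as [N HN].
  exists N. intros k j Hk Hj. apply NNPP. intro Hne.
  assert (Hkgj : is_aut adj (fun x => k (g (tp j x)))).
  { apply aut_comp; [apply Hk | apply (aut_translate adj Htinv); auto]. }
  destruct (Hns _ Hkgj (Hsupp _ Hkgj Hne)) as (n & Hn & Hreach).
  rewrite (tp_base Ho Htinv Htau_tr) in Hreach.
  apply (reach_from_fixed adj k n o _ (proj1 Hk) (proj2 Hk)) in Hreach.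
  specialize (HN j (HT n _ Hn Hreach)). lia.
Qed.

Lemma radon_term_vanishes g : is_aut adj g -> exists N, vanishes_beyond (RT g) N.
Proof.
  intros Hg. destruct (f_translates_vanish g Hg) as [N HN]. exists N. intros j Hj.
  unfold radon_term. cbv zeta.
  rewrite (HN (fun x => x) j (sg_id (inK_subgroup adj)) Hj). apply Cmult_0_l.
Qed.

(* g gam tau^k tau^j = (g tau^(j+k)) gam'  with  gam' = tau^-(j+k) gam tau^(j+k) in M *)
Lemma radon_term_right_Mtau g gam k : is_aut adj g -> M gam ->
  RT (fun x => g (gam (tp k x))) = fun j => RT g (j + k)%Z.
Proof.
  intros Hg Hgam. extensionality j. unfold radon_term. cbv zeta.
  set (gjk := fun x => g (tp (j + k) x)).
  set (gam' := fun y => tp (- (j + k)) (gam (tp (j + k) y))).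
  assert (Hgam' : M gam') by (apply (inM_conj_tp adj Ho Htau Htinv Htau_tr); auto; lia).
  assert (E : (fun x => g (gam (tp k (tp j x)))) = fun x => gjk (gam' x)).
  { extensionality x. unfold gjk, gam'.
    rewrite (tp_cancel Htinv (j + k) (- (j + k))), <- (tp_add Htinv) by lia.
    replace (k + j)%Z with (j + k)%Z by lia. reflexivity. }
  rewrite E, Hf_inv, (dss_right_M adj Ho Htau Htinv Htau_tr Hr Hr2 Hrtau); auto.
  apply (aut_translate adj Htinv); auto.
Qed.

Lemma radon_invariant : invariant adj Mtau RD.
Proof.
  intros g l Hg (gam & k & Hgam & ->). unfold radon. cbv beta.
  rewrite radon_term_right_Mtau by auto.
  apply zsum_shift, radon_term_vanishes, Hg.
Qed.

Lemma f_translate_loc_const g j : is_aut adj g -> exists Fin, forall h, is_aut adj h ->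
  agree_on Fin h g -> f (fun x => h (tp j x)) = f (fun x => g (tp j x)).
Proof.
  intros Hg.
  destruct (quot_loc_const_agree Hf_lc (aut_translate adj Htinv g j Htau Hg)) as [Fin HFin].
  exists (map (tp j) Fin). intros h Hh Hag.
  apply HFin; [apply (aut_translate adj Htinv); auto|].
  intros x Hx. apply Hag, in_map, Hx.
Qed.

Lemma radon_left_K g k N : is_aut adj g -> K k ->
  (forall k' j, K k' -> (Z.of_nat N < Z.abs j)%Z -> f (fun x => k' (g (tp j x))) = RtoC 0) ->
  (forall j, (Z.abs j <= Z.of_nat N)%Z -> f (fun x => k (g (tp j x))) = f (fun x => g (tp j x))) ->
  RD (fun x => k (g x)) = RD g.
Proof.
  intros Hg Hk Htail Hnear. unfold radon. f_equal. extensionality j.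
  unfold radon_term. cbv zeta. f_equal.
  - destruct (Z_le_gt_dec (Z.abs j) (Z.of_nat N)) as [Hle|Hgt]; [apply Hnear, Hle|].
    rewrite (Htail k j Hk), (Htail (fun x => x) j (sg_id (inK_subgroup adj))); auto; lia.
  - apply (dss_left_K adj), Hk.
Qed.

Lemma radon_loc_const : quot_loc_const adj Mtau RD.
Proof.
  apply (quot_loc_const_of_agree (inMtau_subgroup adj Ho Htau Htinv Htau_tr) radon_invariant).
  intros g Hg.
  destruct (f_translates_vanish g Hg) as [N Htail].
  destruct (Z_window_list N) as [js Hjs].
  destruct (list_union_witness (fun j Fin => forall h, is_aut adj h -> agree_on Fin h g ->
              f (fun x => h (tp j x)) = f (fun x => g (tp j x))))
    with (la := js) as [Fin HFin].
  - intros j F F' HFF' HQ h Hh Hag. apply HQ; auto. intros x Hx. apply Hag, HFF', Hx.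
  - intro j. apply f_translate_loc_const, Hg.
  - destruct (aut_inverse g Hg) as (gi & _ & Hgi).
    exists (gi o :: Fin). intros h Hh Hag.
    destruct (factor_left_stabilizer g h o (gi o) Hg Hh) as (k & Hk & ->).
    + apply Hgi.
    + rewrite Hag by (left; reflexivity). apply Hgi.
    + apply (radon_left_K g k N); auto. intros j Hj.
      apply (HFin j (Hjs j Hj) (fun x => k (g x))); auto.
      intros x Hx. apply Hag. right. exact Hx.
Qed.

Lemma radon_comp_supp : quot_comp_supp adj Mtau RD.
Proof.
  destruct Hf_cs as (S & HS & Hsupp).
  exists (right_saturation adj Mtau S). split.
  - apply (quot_compact_right_saturation (inMtau_subgroup adj Ho Htau Htinv Htau_tr)
             (inM_inMtau adj) HS).
  - intros g Hg Hne. apply NNPP. intro Hout. apply Hne. unfold radon.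
    apply zsum_eq_0. intro j. unfold radon_term. cbv zeta.
    destruct (classic (f (fun x => g (tp j x)) = RtoC 0)) as [E|E].
    + rewrite E. apply Cmult_0_l.
    + exfalso. apply Hout.
      assert (Hgj : is_aut adj (fun x => g (tp j x))) by (apply (aut_translate adj Htinv); auto).
      exists (fun x => g (tp j x)), (tp (- j)).
      split; [exact Hgj | split; [apply Hsupp; auto | split; [apply (inMtau_tp adj Ho) |]]].
      extensionality x. rewrite (tp_cancel Htinv); [reflexivity | lia].
Qed.

End Radon.

Theorem lemma3p4
  (q : nat) (Hq : (2 <= q)%nat)
  (V : Type) (adj : V -> V -> Prop) (Htree : is_regular_tree adj q)
  (o : V) (ell : Z -> V) (Hell : bi_geodesic adj ell) (Ho : ell 0%Z = o)
  (tau tinv : V -> V) (Htau : is_aut adj tau)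
  (Htinv : forall x, tinv (tau x) = x /\ tau (tinv x) = x)
  (Htau_tr : forall z, tau (ell z) = ell (z + 1)%Z)
  (r : V -> V) (Hr : inK adj o r) (Hr2 : forall x, r (r x) = x)
  (Hrtau : forall j x, r (tpow tau tinv j (r x)) = tpow tau tinv (- j) x)
  (s s' : C) (f : (V -> V) -> C)
  (Hf : Cc_lc adj (inM adj o ell) f) :
  (* the sum defining R_{s,s'} f (g) has only finitely many nonzero terms *)
  (forall g, is_aut adj g -> exists N : nat, forall j, (Z.of_nat N < Z.abs j)%Z ->
      radon_term adj q o ell tau tinv r s s' f g j = RtoC 0) /\
  (* R_{s,s'} f is a locally constant compactly supported function on G/M<tau> *)
  Cc_lc adj (inMtau adj o ell tau tinv) (radon adj q o ell tau tinv r s s' f).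
Proof.
  destruct Hf as (Hf_inv & Hf_lc & Hf_cs).
  split; [|split; [|split]].
  - intros g Hg. eapply radon_term_vanishes; eauto.
  - eapply radon_invariant; eauto.
  - eapply radon_loc_const; eauto.
  - eapply radon_comp_supp; eauto.
Qed.
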